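(* Let $\Pi$ be the topological prismatoid \#1039 of Criado and Santos: a polyhedral $4$-sphere on the $14$ vertices $0,1,2,3,4,5,6,a,b,c,d,e,f,g$ whose simplicial facets are exactly the following $4$-simplices (each string lists the five vertices of a facet): 0145f, 014ad, 014ae, 014bc, 014bf, 014cd, 04bcd, 05bde, 05cde, 0123d, 0126d, 0134e, 013ad, 013ae, 0156g, 015bf, 015bg, 016cd, 016cg, 01bcg, 0234e, 023cd, 023ce, 0245f, 024ae, 024af, 0256g, 025ae, 025af, 025be, 025bg, 026be, 026bg, 026cd, 026ce, 03acd, 03ace, 04abd, 04abf, 05abd, 05abf, 05acd, 05ace, 06bce, 06bcg, 0bcde, 1234e, 123ae, 123af, 123bf, 123bg, 123cd, 123cg, 1245f, 124ae, 124af, 1256g, 125bf, 125bg, 126cd, 126cg, 13abf, 13abg, 13acd, 13acg, 14abf, 14abg, 14acd, 14acg, 14bcg, 23ace, 23acf, 23bcf, 23bcg, 25abe, 25abf, 26abe, 26abf, 26ace, 26acf, 26bcf, 26bcg, 3abfg, 3acfg, 3bcfg, 4abcd, 4abcg, 5abde, 5acde, 6abef, 6acef, 6bcef, and which in addition has exactly two non-simplicial facets, its two bases, with vertex sets $\{0,1,\dots,6\}$ and $\{a,b,\dots,g\}$. Then $\Pi$ is not realizable: there is no convex $5$-polytope whose boundary complex is combinatorially isomorphic to $\Pi$.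
   Context: A topological prismatoid (Criado–Santos) is a combinatorial abstraction of a geometric prismatoid, i.e. of a polytope all of whose vertices lie in two parallel facets (the bases); all other facets are here simplices. *)

From mathcomp Require Import all_boot all_order all_algebra.
From mathcomp Require Import reals.
Set Implicit Arguments. Unset Strict Implicit. Unset Printing Implicit Defensive.
Import Order.TTheory GRing.Theory Num.Theory.
Local Open Scope ring_scope.

(* Vertex labels of the prismatoid: 'I_14, with
   0..6 |-> 0..6 and a,b,c,d,e,f,g |-> 7,8,9,10,11,12,13. *)
Definition label := 'I_14.

Definition simplicial_facets_nat : seq (seq nat) :=
  [:: [:: 0; 1; 4; 5; 12];
   [:: 0; 1; 4; 7; 10];
   [:: 0; 1; 4; 7; 11];
   [:: 0; 1; 4; 8; 9];
   [:: 0; 1; 4; 8; 12];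
   [:: 0; 1; 4; 9; 10];
   [:: 0; 4; 8; 9; 10];
   [:: 0; 5; 8; 10; 11];
   [:: 0; 5; 9; 10; 11];
   [:: 0; 1; 2; 3; 10];
   [:: 0; 1; 2; 6; 10];
   [:: 0; 1; 3; 4; 11];
   [:: 0; 1; 3; 7; 10];
   [:: 0; 1; 3; 7; 11];
   [:: 0; 1; 5; 6; 13];
   [:: 0; 1; 5; 8; 12];
   [:: 0; 1; 5; 8; 13];
   [:: 0; 1; 6; 9; 10];
   [:: 0; 1; 6; 9; 13];
   [:: 0; 1; 8; 9; 13];
   [:: 0; 2; 3; 4; 11];
   [:: 0; 2; 3; 9; 10];
   [:: 0; 2; 3; 9; 11];
   [:: 0; 2; 4; 5; 12];
   [:: 0; 2; 4; 7; 11];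
   [:: 0; 2; 4; 7; 12];
   [:: 0; 2; 5; 6; 13];
   [:: 0; 2; 5; 7; 11];
   [:: 0; 2; 5; 7; 12];
   [:: 0; 2; 5; 8; 11];
   [:: 0; 2; 5; 8; 13];
   [:: 0; 2; 6; 8; 11];
   [:: 0; 2; 6; 8; 13];
   [:: 0; 2; 6; 9; 10];
   [:: 0; 2; 6; 9; 11];
   [:: 0; 3; 7; 9; 10];
   [:: 0; 3; 7; 9; 11];
   [:: 0; 4; 7; 8; 10];
   [:: 0; 4; 7; 8; 12];
   [:: 0; 5; 7; 8; 10];
   [:: 0; 5; 7; 8; 12];
   [:: 0; 5; 7; 9; 10];
   [:: 0; 5; 7; 9; 11];
   [:: 0; 6; 8; 9; 11];
   [:: 0; 6; 8; 9; 13];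
   [:: 0; 8; 9; 10; 11];
   [:: 1; 2; 3; 4; 11];
   [:: 1; 2; 3; 7; 11];
   [:: 1; 2; 3; 7; 12];
   [:: 1; 2; 3; 8; 12];
   [:: 1; 2; 3; 8; 13];
   [:: 1; 2; 3; 9; 10];
   [:: 1; 2; 3; 9; 13];
   [:: 1; 2; 4; 5; 12];
   [:: 1; 2; 4; 7; 11];
   [:: 1; 2; 4; 7; 12];
   [:: 1; 2; 5; 6; 13];
   [:: 1; 2; 5; 8; 12];
   [:: 1; 2; 5; 8; 13];
   [:: 1; 2; 6; 9; 10];
   [:: 1; 2; 6; 9; 13];
   [:: 1; 3; 7; 8; 12];
   [:: 1; 3; 7; 8; 13];
   [:: 1; 3; 7; 9; 10];
   [:: 1; 3; 7; 9; 13];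
   [:: 1; 4; 7; 8; 12];
   [:: 1; 4; 7; 8; 13];
   [:: 1; 4; 7; 9; 10];
   [:: 1; 4; 7; 9; 13];
   [:: 1; 4; 8; 9; 13];
   [:: 2; 3; 7; 9; 11];
   [:: 2; 3; 7; 9; 12];
   [:: 2; 3; 8; 9; 12];
   [:: 2; 3; 8; 9; 13];
   [:: 2; 5; 7; 8; 11];
   [:: 2; 5; 7; 8; 12];
   [:: 2; 6; 7; 8; 11];
   [:: 2; 6; 7; 8; 12];
   [:: 2; 6; 7; 9; 11];
   [:: 2; 6; 7; 9; 12];
   [:: 2; 6; 8; 9; 12];
   [:: 2; 6; 8; 9; 13];
   [:: 3; 7; 8; 12; 13];
   [:: 3; 7; 9; 12; 13];
   [:: 3; 8; 9; 12; 13];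
   [:: 4; 7; 8; 9; 10];
   [:: 4; 7; 8; 9; 13];
   [:: 5; 7; 8; 10; 11];
   [:: 5; 7; 9; 10; 11];
   [:: 6; 7; 8; 11; 12];
   [:: 6; 7; 9; 11; 12];
   [:: 6; 8; 9; 11; 12]].

Definition set_of_nats (s : seq nat) : {set label} :=
  [set i : label | nat_of_ord i \in s].

Definition base0 : {set label} := [set i : label | (i < 7)%N].
Definition base1 : {set label} := [set i : label | (7 <= i)%N].

Definition Pi_facets : seq {set label} :=
  base0 :: base1 :: map set_of_nats simplicial_facets_nat.

Definition dot (R : realType) (u v : 'rV[R]_5) : R := \sum_(k < 5) u 0 k * v 0 k.

(* Homogenized coordinates [p i, 1] of the points with labels in F (other rows 0);
   its rank is (affine dimension of {p i | i in F}) + 1. *)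
Definition hmx (R : realType) (p : label -> 'rV[R]_5) (F : {set label}) : 'M[R]_(14, 6) :=
  \matrix_(i < 14, j < 6)
    (if i \in F then (if (j < 5)%N then p i 0 (inord j) else 1) else 0).

(* F is the set of points of {p i} lying on some supporting hyperplane
   {x | dot c x = b} of conv{p i}, c <> 0 (an exposed face, labelled by its points). *)
Definition is_face_set (R : realType) (p : label -> 'rV[R]_5) (F : {set label}) : Prop :=
  exists (c : 'rV[R]_5) (b : R), c != 0 /\
    forall i : label, (i \in F -> dot c (p i) = b) /\ (i \notin F -> dot c (p i) < b).

Definition is_vertex (R : realType) (p : label -> 'rV[R]_5) (i : label) : Prop :=
  is_face_set p [set i].

Definition is_facet_set (R : realType) (p : label -> 'rV[R]_5) (F : {set label}) : Prop :=
  is_face_set p F /\ \rank (hmx p F) = 5%N.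

(* Since the face lattice of a polytope is determined by
   its vertex-facet incidences, this is combinatorial isomorphism of boundary complexes. *)
Definition realizes (R : realType) (p : label -> 'rV[R]_5) : Prop :=
  injective p /\
  (forall i, is_vertex p i) /\
  \rank (hmx p setT) = 6%N /\
  (forall F : {set label}, is_facet_set p F <-> F \in Pi_facets).

From mathcomp Require Import all_boot all_order all_algebra.
From mathcomp Require Import reals.
From mathcomp Require Import ring lra.
Set Implicit Arguments. Unset Strict Implicit. Unset Printing Implicit Defensive.
Import Order.TTheory GRing.Theory Num.Theory.
Local Open Scope ring_scope.

(* Write chi s for the determinant of the homogenized points (p i, 1), i in s.
   Each facet F of a realization p has an affine functional vanishing on F and
   negative at every other vertex; so if five entries of s lie on F and the
   sixth does not, exchanging the sixth for another vertex off F keeps the sign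
   of chi.  Starting from chi [1 2 3 4 e 0], nonzero because 1234e spans a facet
   hyperplane and 0 is off it, nine such exchanges (and two transpositions)
   determine the signs of the brackets chi [u 2 3 v e 0], u, v in {1, 4, 5, a}.
   They make all three terms of the three-term Grassmann-Pluecker relation
   between these brackets negative, which is absurd. *)

Section RowReplacement.
Variables (R : fieldType) (n : nat).
Implicit Types (A : 'M[R]_n) (u v w : 'rV[R]_n).

Definition mxset A (i : 'I_n) v : 'M_n :=
  \matrix_(k, l) if k == i then v 0 l else A k l.

Lemma row_mxset A i v k : row k (mxset A i v) = if k == i then v else row k A.
Proof. by apply/rowP => l; rewrite !mxE; case: eqP; rewrite ?mxE. Qed.

Lemma mxset_row A i : mxset A i (row i A) = A.
Proof. by apply/matrixP => k l; rewrite !mxE; case: eqP => // ->. Qed.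

Lemma mxsetC A i j u v : i != j ->
  mxset (mxset A i u) j v = mxset (mxset A j v) i u.
Proof.
move=> ij; apply/matrixP => k l; rewrite !mxE.
by have [->|_] := eqVneq k j; [rewrite eq_sym (negPf ij) | case: (k == i)].
Qed.

Definition cofcol A (i : 'I_n) : 'cV[R]_n := \col_l cofactor A i l.

Lemma det_mxset A i v : \det (mxset A i v) = (v *m cofcol A i) 0 0.
Proof.
rewrite (expand_det_row _ i) mxE; apply: eq_bigr => l _; rewrite !mxE eqxx.
congr (_ * (_ * \det _)); apply/matrixP => k l'.
by rewrite !mxE lift_eqF.
Qed.

Lemma det_mxset_cross A i (phi : 'cV[R]_n) v w :
    (forall k, k != i -> row k A *m phi = 0) ->
  \det (mxset A i v) * (w *m phi) 0 0 = \det (mxset A i w) * (v *m phi) 0 0.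
Proof.
(* u below is killed by phi, like the rows other than i; put in row i, it
   makes the matrix singular unless phi = 0. *)
move=> kerA; have [->|phi_neq0] := eqVneq phi 0; first by rewrite !mulmx0 !mxE !mulr0.
set u := (w *m phi) 0 0 *: v - (v *m phi) 0 0 *: w.
have u_ker k : row k (mxset A i u) *m phi = 0.
  rewrite row_mxset; case: eqP => [_|/eqP]; last exact: kerA.
  apply/matrixP => a b; rewrite !ord1 mulmxBl -!scalemxAl !mxE.
  by rewrite mulrC subrr.
have : \det (mxset A i u) = 0.
  apply/eqP; apply: contraNT phi_neq0; rewrite -unitfE -unitmxE => unitM.
  have M0 : mxset A i u *m phi = 0.
    by apply/row_matrixP => k; rewrite row_mul u_ker row0.
  by rewrite -(mulKmx unitM phi) M0 mulmx0.
rewrite !det_mxset mulmxBl -!scalemxAl !mxE => /eqP.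
by rewrite subr_eq0 => /eqP; rewrite mulrC => ->; rewrite mulrC.
Qed.

Lemma det_neq0_corank1 m (A : 'M[R]_n.+1) (B : 'M_(m, n.+1)) (phi : 'cV_n.+1) :
  (B <= A)%MS -> \rank B = n -> B *m phi = 0 -> A *m phi != 0 -> \det A != 0.
Proof.
move=> sBA rkB Bphi; apply: contraNneq => detA0.
have rkA : (\rank A <= n)%N.
  have : ~~ row_free A by rewrite row_free_unit unitmxE detA0 unitr0.
  by rewrite /row_free -ltnS ltn_neqAle rank_leq_row andbT.
have rkBA := mxrankS sBA; rewrite rkB in rkBA.
have /submxP[X ->] : (A <= B)%MS.
  by rewrite -(mxrank_leqif_sup sBA) rkB eqn_leq rkA rkBA.
by rewrite -mulmxA Bphi mulmx0.
Qed.

End RowReplacement.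

Lemma sgr_det_mxset (R : realFieldType) n (A : 'M[R]_n) i (phi : 'cV_n) v w :
    (forall k, k != i -> row k A *m phi = 0) ->
    (v *m phi) 0 0 < 0 -> (w *m phi) 0 0 < 0 ->
  Num.sg (\det (mxset A i v)) = Num.sg (\det (mxset A i w)).
Proof.
move=> kerA vneg wneg; have := congr1 Num.sg (det_mxset_cross v w kerA).
by rewrite !sgrM (ltr0_sg vneg) (ltr0_sg wneg) !mulrN1 => /oppr_inj.
Qed.

Section Plucker.
Variables (R : fieldType) (n : nat) (A : 'M[R]_n) (i j : 'I_n).
Hypothesis neq_ij : i != j.

Definition bracket (u v : 'rV[R]_n) : R := \det (mxset (mxset A i u) j v).

Lemma bracketEr u v : bracket u v = (v *m cofcol (mxset A i u) j) 0 0.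
Proof. exact: det_mxset. Qed.

Lemma bracketEl u v : bracket u v = (u *m cofcol (mxset A j v) i) 0 0.
Proof. by rewrite /bracket mxsetC // det_mxset. Qed.

Lemma bracketDl u u' v : bracket (u + u') v = bracket u v + bracket u' v.
Proof. by rewrite !bracketEl mulmxDl [fun_of_matrix (_ + _) _ _]mxE. Qed.

Lemma bracketDr u v v' : bracket u (v + v') = bracket u v + bracket u v'.
Proof. by rewrite !bracketEr mulmxDl [fun_of_matrix (_ + _) _ _]mxE. Qed.

Lemma bracketZl a u v : bracket (a *: u) v = a * bracket u v.
Proof. by rewrite !bracketEl -scalemxAl [fun_of_matrix (_ *: _) _ _]mxE. Qed.

Lemma bracket_alt u : bracket u u = 0.
Proof.
apply: (determinant_alternate neq_ij) => l.
by rewrite !mxE !eqxx; case: ifP.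
Qed.

Lemma bracket_row u k : k != i -> k != j -> bracket u (row k A) = 0.
Proof.
move=> ki kj; apply: (determinant_alternate kj) => l.
by rewrite !mxE eqxx (negPf ki) (negPf kj).
Qed.

Lemma bracket_anti u v : bracket u v = - bracket v u.
Proof.
have := bracket_alt (u + v).
rewrite bracketDl !bracketDr !bracket_alt add0r addr0 => /eqP.
by rewrite addr_eq0 => /eqP.
Qed.

(* If bracket y z != 0, the rows of A other than i, j together with y and z
   form a basis, and the linear form bracket u vanishes on all of them. *)
Lemma bracketl_eq0 u y z d :
  bracket y z != 0 -> bracket u y = 0 -> bracket u z = 0 -> bracket u d = 0.
Proof.
move=> yz_neq0 uy uz; set c := cofcol (mxset A i u) j.
have unitM : mxset (mxset A i y) j z \in unitmx by rewrite unitmxE unitfE.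
have Mc : mxset (mxset A i y) j z *m c = 0.
  apply/row_matrixP => k; rewrite row_mul row0 !row_mxset.
  apply/matrixP => a b; rewrite !ord1 [RHS]mxE -bracketEr.
  case: eqVneq => [_|kj]; first exact: uz.
  case: eqVneq => [_|ki]; [exact: uy | exact: bracket_row].
by rewrite bracketEr -/c -(mulKmx unitM c) Mc !mulmx0 mxE.
Qed.

Lemma bracket_plucker a b c d :
  bracket a b * bracket c d - bracket a c * bracket b d + bracket a d * bracket b c = 0.
Proof.
(* bracket u vanishes at a, b and c, hence everywhere by bracketl_eq0,
   unless bracket a b = bracket a c = bracket b c = 0. *)
set u := bracket b c *: a + (- bracket a c) *: b + bracket a b *: c.
have bracket_u v : bracket u v =
    bracket b c * bracket a v - bracket a c * bracket b v + bracket a b * bracket c v.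
  by rewrite !bracketDl !bracketZl mulNr.
have ua : bracket u a = 0.
  by rewrite bracket_u bracket_alt (bracket_anti b a) (bracket_anti c a); ring.
have ub : bracket u b = 0 by rewrite bracket_u bracket_alt (bracket_anti c b); ring.
have uc : bracket u c = 0 by rewrite bracket_u bracket_alt; ring.
have <- : bracket u d = bracket a b * bracket c d - bracket a c * bracket b d
                        + bracket a d * bracket b c by rewrite bracket_u; ring.
have [ab|ab] := eqVneq (bracket a b) 0; last exact: bracketl_eq0 ab ua ub.
have [ac|ac] := eqVneq (bracket a c) 0; last exact: bracketl_eq0 ac ua uc.
have [bc|bc] := eqVneq (bracket b c) 0; last exact: bracketl_eq0 bc ub uc.
by rewrite bracket_u ab ac bc !mul0r subrr addr0.
Qed.

End Plucker.

Lemma mul_gt0_sgr (R : realDomainType) (x y z : R) :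
  z != 0 -> Num.sg x = Num.sg z -> Num.sg y = Num.sg z -> 0 < x * y.
Proof. by move=> z_neq0 xz yz; rewrite -sgr_gt0 sgrM xz yz -expr2 sqr_sg z_neq0 ltr01. Qed.

Definition facet_lists : seq (seq nat) := iota 0 7 :: iota 7 7 :: simplicial_facets_nat.

Lemma set_of_nats_facet l : l \in facet_lists -> set_of_nats l \in Pi_facets.
Proof.
have base0E : base0 = set_of_nats (iota 0 7).
  by apply/setP => i; rewrite !in_set mem_iota.
have base1E : base1 = set_of_nats (iota 7 7).
  by apply/setP => i; rewrite !in_set mem_iota ltn_ord andbT.
case/predU1P=> [-> | /predU1P[-> | l_simp]].
- by rewrite -base0E mem_head.
- by rewrite -base1E mem_behead ?mem_head.
- by do 2 apply: mem_behead; apply: map_f.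
Qed.

Lemma facet_lists_lt14 l x : l \in facet_lists -> x \in l -> (x < 14)%N.
Proof.
have /allP/(_ l)/[apply]/allP : all (all (fun y => y < 14)%N) facet_lists by [].
exact.
Qed.

Lemma mem_set_of_nats l x : (x < 14)%N -> (inord x \in set_of_nats l) = (x \in l).
Proof. by move=> x14; rewrite inE inordK. Qed.

Definition exchangeable (l s : seq nat) (k : 'I_6) (w : nat) : bool :=
  [&& l \in facet_lists,
      all (fun j => (j == k :> nat) || (nth 0 s j \in l)) (iota 0 6) &
      all (fun x => (x < 14)%N && (x \notin l)) [:: nth 0 s k; w]].

Section Chirotope.
Variables (R : realType) (p : label -> 'rV[R]_5).

Definition hpoint (i : label) : 'rV[R]_6 :=
  \row_j (if (j < 5)%N then p i 0 (inord j) else 1).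

(* Labels are given as naturals; inord sends an out-of-range one to 0. *)
Definition chimx (s : seq nat) : 'M[R]_6 := \matrix_k hpoint (inord (nth 0 s k)).

Definition chi (s : seq nat) : R := \det (chimx s).

Lemma row_chimx s k : row k (chimx s) = hpoint (inord (nth 0 s k)).
Proof. exact: rowK. Qed.

Lemma chimx_set_nth s (k : 'I_6) w :
  chimx (set_nth 0 s k w) = mxset (chimx s) k (hpoint (inord w)).
Proof.
by apply/row_matrixP => l; rewrite row_mxset !row_chimx nth_set_nth /= -val_eqE; case: ifP.
Qed.

Lemma chi_set_nth2 s (k l : 'I_6) u v :
  chi (set_nth 0 (set_nth 0 s k u) l v) =
  bracket (chimx s) k l (hpoint (inord u)) (hpoint (inord v)).
Proof. by rewrite /chi !chimx_set_nth. Qed.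

Lemma chi_swap s (k l : 'I_6) : k != l ->
  chi (set_nth 0 (set_nth 0 s k (nth 0 s l)) l (nth 0 s k)) = - chi s.
Proof. by move=> kl; rewrite chi_set_nth2 bracket_anti // /bracket -!row_chimx !mxset_row. Qed.

Lemma chi_plucker s (k l : 'I_6) a b c d : k != l ->
  let chi2 u v := chi (set_nth 0 (set_nth 0 s k u) l v) in
  chi2 a b * chi2 c d - chi2 a c * chi2 b d + chi2 a d * chi2 b c = 0.
Proof. by move=> kl; rewrite /= !chi_set_nth2 bracket_plucker. Qed.

Lemma row_hmx F i : row i (hmx p F) = if i \in F then hpoint i else 0.
Proof. by apply/rowP => j; rewrite !mxE; case: (i \in F); rewrite ?mxE. Qed.

Lemma realizes_facet F : realizes p -> F \in Pi_facets ->
  exists phi : 'cV[R]_6, [/\ \rank (hmx p F) = 5%N,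
    forall i, i \in F -> hpoint i *m phi = 0 &
    forall i, i \notin F -> (hpoint i *m phi) 0 0 < 0].
Proof.
move=> [_ [_ [_ facetP]]] /facetP[[c [b [_ supp]]] rkF].
pose phi : 'cV[R]_6 := \col_j (if (j < 5)%N then c 0 (inord j) else - b).
have hpoint_phi i : (hpoint i *m phi) 0 0 = dot c (p i) - b.
  rewrite mxE big_ord_recr /= !mxE /= mul1r; congr (_ + _).
  by apply: eq_bigr => j _; rewrite !mxE /= ltn_ord inord_val mulrC.
exists phi; split=> // i.
  move=> /(proj1 (supp i)) ci; apply/matrixP => a b'.
  by rewrite !ord1 hpoint_phi ci subrr mxE.
by move=> /(proj2 (supp i)); rewrite hpoint_phi subr_lt0.
Qed.

Lemma hmx_mul_facet (F : {set label}) (phi : 'cV[R]_6) :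
  (forall i, i \in F -> hpoint i *m phi = 0) -> hmx p F *m phi = 0.
Proof.
move=> on_F; apply/row_matrixP => i; rewrite row_mul row_hmx row0.
by case: ifP => [/on_F | _]; rewrite ?mul0mx.
Qed.

Lemma sgr_chi_exchange l s (k : 'I_6) w : realizes p -> exchangeable l s k w ->
  Num.sg (chi (set_nth 0 s k w)) = Num.sg (chi s).
Proof.
move=> realP /and3P[l_facet /allP others] /=.
case/and3P=> [/andP[sk14 sk_off] /andP[w14 w_off] _].
have [phi [_ on_F off_F]] := realizes_facet realP (set_of_nats_facet l_facet).
rewrite /chi chimx_set_nth -[X in _ = Num.sg (\det X)](mxset_row _ k) row_chimx.
apply: (sgr_det_mxset (phi := phi)).
- move=> j jk; rewrite row_chimx on_F //.
  have /orP[/eqP jk' | sj_in] : (j == k :> nat) || (nth 0 s j \in l).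
    by apply: others; rewrite mem_iota ltn_ord.
    by move: jk; rewrite (val_inj jk') eqxx.
  by rewrite mem_set_of_nats ?(facet_lists_lt14 l_facet).
- by rewrite off_F // mem_set_of_nats.
- by rewrite off_F // mem_set_of_nats.
Qed.

Lemma chi_rcons_neq0 l w : realizes p -> l \in simplicial_facets_nat ->
  w \notin l -> (w < 14)%N -> chi (rcons l w) != 0.
Proof.
move=> realP l_simp w_off w14.
have /allP/(_ l l_simp)/eqP size_l : all (fun l => size l == 5%N) simplicial_facets_nat by [].
have l_facet : l \in facet_lists by do 2 apply: mem_behead.
have [phi [rkF on_F off_F]] := realizes_facet realP (set_of_nats_facet l_facet).
apply: (det_neq0_corank1 (B := hmx p (set_of_nats l)) (phi := phi)) => //.
- apply/row_subP => i; rewrite row_hmx; case: ifP => [|_]; last exact: sub0mx.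
  rewrite inE -index_mem size_l => il.
  apply/(eq_row_sub (Ordinal (ltn_trans il (ltnSn 5)))).
  by rewrite row_chimx /= nth_rcons size_l il nth_index ?inord_val // -index_mem size_l.
- exact: hmx_mul_facet.
- apply: contraTneq (off_F (inord w) _) => [M0|]; last by rewrite mem_set_of_nats.
  have -> : hpoint (inord w) = row ord_max (chimx (rcons l w)).
    by rewrite row_chimx /= nth_rcons size_l ltnn eqxx.
  by rewrite -row_mul M0 row0 mxE ltxx.
Qed.

End Chirotope.

Theorem mainTheorem3 (R : realType) :
  ~ (exists p : label -> 'rV[R]_5, realizes p).
Proof.
move=> [p realP]; have flip := sgr_chi_exchange realP.
pose Z := chi p [:: 1; 2; 3; 4; 11; 0].
have Z_neq0 : Z != 0 := chi_rcons_neq0 (l := [:: 1; 2; 3; 4; 11]) (w := 0) realP isT isT isT.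
have s1 : Num.sg (chi p [:: 1; 7; 3; 4; 11; 0]) = Num.sg Z :=
  flip [:: 0; 1; 3; 4; 11] [:: 1; 2; 3; 4; 11; 0] 1 7 isT.
have s2 : Num.sg (chi p [:: 1; 2; 3; 4; 10; 0]) = Num.sg Z :=
  flip (iota 0 7) [:: 1; 2; 3; 4; 11; 0] 4 10 isT.
have s3 : Num.sg (chi p [:: 5; 2; 3; 4; 11; 0]) = Num.sg Z :=
  flip [:: 0; 2; 3; 4; 11] [:: 1; 2; 3; 4; 11; 0] 0 5 isT.
have s4 : Num.sg (chi p [:: 7; 2; 3; 4; 11; 0]) = Num.sg Z :=
  flip [:: 0; 2; 3; 4; 11] [:: 1; 2; 3; 4; 11; 0] 0 7 isT.
have s5 : Num.sg (chi p [:: 7; 2; 5; 4; 11; 0]) = Num.sg Z :=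
  etrans (flip [:: 0; 2; 4; 7; 11] [:: 7; 2; 3; 4; 11; 0] 2 5 isT) s4.
have s6 : Num.sg (chi p [:: 1; 7; 3; 2; 11; 0]) = Num.sg Z :=
  etrans (flip [:: 0; 1; 3; 7; 11] [:: 1; 7; 3; 4; 11; 0] 3 2 isT) s1.
have s7 : Num.sg (chi p [:: 1; 2; 3; 5; 10; 0]) = Num.sg Z :=
  etrans (flip [:: 0; 1; 2; 3; 10] [:: 1; 2; 3; 4; 10; 0] 3 5 isT) s2.
have s8 : Num.sg (chi p [:: 1; 2; 3; 5; 11; 0]) = Num.sg Z :=
  etrans (flip (iota 0 7) [:: 1; 2; 3; 5; 10; 0] 4 11 isT) s7.
have s9 : Num.sg (chi p [:: 7; 2; 5; 3; 11; 0]) = Num.sg Z :=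
  etrans (flip [:: 0; 2; 5; 7; 11] [:: 7; 2; 5; 4; 11; 0] 3 3 isT) s5.
have swap17 := chi_swap p [:: 1; 2; 3; 7; 11; 0] (k := 1) (l := 3) isT.
have swap75 := chi_swap p [:: 7; 2; 3; 5; 11; 0] (k := 2) (l := 3) isT.
have := chi_plucker p [:: 1; 2; 3; 4; 11; 0] 1 7 5 4 (k := 0) (l := 3) isT.
move: (mul_gt0_sgr Z_neq0 s6 s3) (mul_gt0_sgr Z_neq0 s8 s4) (mul_gt0_sgr Z_neq0 erefl s9).
rewrite /= swap17 swap75 -/Z.
lra.
Qed.
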